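(* Let $M$ be a Coxeter diagram over $I$ with no subdiagram of type $\mathsf{A}_3$ and let $\Gamma=(V,\tau,* )$ be a geometry over $I$ satisfying Properties (F), (P) and (D). Let $X$ be a flag of $\Gamma$ (possibly empty) and $i\in I\setminus\tau(X)$. Form $\Gamma'=(V\cup\{x\},\tau,* )$ by adding a single new element $x$ of type $i$, incident exactly with the elements of $X$ and with all elements $v\in V$ whose type is different from $i$ and not adjacent to $i$ in $M$ (incidences among elements of $V$ unchanged). Then $\Gamma'$ satisfies Properties (F), (P) and (D), and $X\cup\{x\}$ is a flag of $\Gamma'$.
   Context: A geometry over $I$ is a triple $(V,\tau,* )$ with $\tau:V\to I$ and $*$ a symmetric relation such that elements of equal type are incident iff equal. A flag is a set of pairwise incident elements; the residue of a flag $X$ is the geometry formed by the elements outside $X$ incident with all of $X$. Coxeter diagram $M$ with matrix $(m_{i,j})$; nodes $i\ne j$ are adjacent iff $m_{i,j}\ge3$; a subdiagram of type $\mathsf{A}_3$ is three nodes $i,j,k$ with $m_{i,j}=m_{j,k}=3$, $m_{i,k}=2$. A rank 2 geometry (bipartite incidence graph) is without $k$-gons if it has no cycle of length $2k$. (F) Elements of distinct non-adjacent types are always incident. (P) For adjacent nodes $i,j$ and any flag $X$ of type $J$ with $i,j\notin J$ containing a vertex of every node of $I\setminus\{i,j\}$ adjacent to $i$ or $j$, the restriction of the residue of $X$ to types $i,j$ has no $t$-gons for $t<m_{i,j}$. (D) If $m_{i,j}\ge4$, the restriction of the geometry to types $i$ and $j$ has no digons. *)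

From Stdlib Require Import Arith.
Set Implicit Arguments.
Unset Strict Implicit.

(* Coxeter matrix entries: [Some n] is the integer n, [None] is infinity. *)
Definition entry := option nat.

Definition lt_entry (t : nat) (e : entry) : Prop :=
  match e with Some n => t < n | None => True end.
Definition ge_entry (e : entry) (n : nat) : Prop :=
  match e with Some k => n <= k | None => True end.

Definition coxeter_diagram (I : Type) (m : I -> I -> entry) : Prop :=
  (forall i, m i i = Some 1) /\
  (forall i j, m i j = m j i) /\
  (forall i j, i <> j -> ge_entry (m i j) 2).

Definition adjacent (I : Type) (m : I -> I -> entry) (i j : I) : Prop :=
  i <> j /\ ge_entry (m i j) 3.

Definition no_A3 (I : Type) (m : I -> I -> entry) : Prop :=
  ~ (exists i j k : I, m i j = Some 3 /\ m j k = Some 3 /\ m i k = Some 2).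

Definition geometry (I V : Type) (tau : V -> I) (inc : V -> V -> Prop) : Prop :=
  (forall u v, inc u v -> inc v u) /\
  (forall u v, tau u = tau v -> (inc u v <-> u = v)).

Definition flag (V : Type) (inc : V -> V -> Prop) (X : V -> Prop) : Prop :=
  forall u v, X u -> X v -> inc u v.

(* A t-gon (t >= 2) among the elements satisfying S: a cycle of length 2t
   in the incidence graph restricted to S. *)
Definition has_ngon (V : Type) (inc : V -> V -> Prop) (S : V -> Prop) (t : nat) : Prop :=
  2 <= t /\
  exists f : nat -> V,
    (forall a b, a < 2 * t -> b < 2 * t -> f a = f b -> a = b) /\
    (forall a, a < 2 * t -> S (f a)) /\
    (forall a, a < 2 * t -> inc (f a) (f ((a + 1) mod (2 * t)))).

Definition residue_ij (I V : Type) (tau : V -> I) (inc : V -> V -> Prop)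
    (X : V -> Prop) (i j : I) (v : V) : Prop :=
  ~ X v /\ (forall w, X w -> inc v w) /\ (tau v = i \/ tau v = j).

Definition propF (I V : Type) (m : I -> I -> entry) (tau : V -> I)
    (inc : V -> V -> Prop) : Prop :=
  forall u v, tau u <> tau v -> ~ adjacent m (tau u) (tau v) -> inc u v.

Definition propP (I V : Type) (m : I -> I -> entry) (tau : V -> I)
    (inc : V -> V -> Prop) : Prop :=
  forall (i j : I) (X : V -> Prop),
    adjacent m i j ->
    flag inc X ->
    (forall w, X w -> tau w <> i /\ tau w <> j) ->
    (forall k, k <> i -> k <> j -> (adjacent m i k \/ adjacent m j k) ->
       exists w, X w /\ tau w = k) ->
    forall t, lt_entry t (m i j) -> ~ has_ngon inc (residue_ij tau inc X i j) t.

Definition propD (I V : Type) (m : I -> I -> entry) (tau : V -> I)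
    (inc : V -> V -> Prop) : Prop :=
  forall i j, ge_entry (m i j) 4 ->
    ~ has_ngon inc (fun v => tau v = i \/ tau v = j) 2.

(* The extended geometry on option V, with None the new element x of type i. *)
Definition ext_type (I V : Type) (tau : V -> I) (i : I) (u : option V) : I :=
  match u with Some v => tau v | None => i end.

Definition ext_inc (I V : Type) (m : I -> I -> entry) (tau : V -> I)
    (inc : V -> V -> Prop) (X : V -> Prop) (i : I) (u w : option V) : Prop :=
  match u, w with
  | Some a, Some b => inc a b
  | None, None => True
  | None, Some v | Some v, None => X v \/ (tau v <> i /\ ~ adjacent m i (tau v))
  end.

Definition ext_flag (V : Type) (X : V -> Prop) (u : option V) : Prop :=
  match u with Some v => X v | None => True end.

(* The new element x lies on no short cycle of a rank 2 residue: a cycle through x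
   in types {i, c}, c adjacent to i, would give two distinct neighbours of x of type c.
   Elements of type c incident with x must lie in X (the non-adjacent incidences never
   reach type c), and X, being a flag, has at most one element of each type.  The same
   count rules out x being the only element of type i needed to cover a residue of
   type {j, k} adjacent to i.  Hence every cycle of Gamma' that (P) or (D) must exclude
   is already a cycle of Gamma. *)
From Stdlib Require Import Arith Lia Classical.
Set Implicit Arguments.
Unset Strict Implicit.

Lemma adjacent_sym (I : Type) (m : I -> I -> entry) (a b : I) :
  coxeter_diagram m -> adjacent m a b -> adjacent m b a.
Proof.
  intros [_ [Hsym _]] [Hne Hge]. split; [congruence|]. rewrite Hsym. exact Hge.
Qed.

Lemma adjacent_of_ge3 (I : Type) (m : I -> I -> entry) (a b : I) :
  coxeter_diagram m -> ge_entry (m a b) 3 -> adjacent m a b.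
Proof.
  intros [Hdiag _] Hge. split; [|exact Hge].
  intros <-. rewrite Hdiag in Hge. simpl in Hge. lia.
Qed.

Lemma adjacent_other (I : Type) (m : I -> I -> entry) (i j k : I) :
  coxeter_diagram m -> adjacent m j k -> i = j \/ i = k ->
  exists c, adjacent m i c /\ forall l, l = j \/ l = k -> l = i \/ l = c.
Proof.
  intros Hcox Hjk [<- | <-].
  - exists k. split; [exact Hjk|]. tauto.
  - exists j. split; [exact (adjacent_sym Hcox Hjk)|]. tauto.
Qed.

Lemma flag_type_inj (I V : Type) (tau : V -> I) (inc : V -> V -> Prop) (X : V -> Prop)
    (u v : V) :
  geometry tau inc -> flag inc X -> X u -> X v -> tau u = tau v -> u = v.
Proof.
  intros [_ Hgeo] HX Hu Hv Huv. apply (Hgeo u v Huv). exact (HX u v Hu Hv).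
Qed.

Lemma residue_ij_type (I V : Type) (tau : V -> I) (inc : V -> V -> Prop) (Y : V -> Prop)
    (j k : I) (v : V) :
  residue_ij tau inc Y j k v -> tau v = j \/ tau v = k.
Proof. intros [_ [_ Htype]]. exact Htype. Qed.

Definition ngon_cycle (V : Type) (inc : V -> V -> Prop) (S : V -> Prop) (t : nat)
    (f : nat -> V) : Prop :=
  (forall a b, a < 2 * t -> b < 2 * t -> f a = f b -> a = b) /\
  (forall a, a < 2 * t -> S (f a)) /\
  (forall a, a < 2 * t -> inc (f a) (f ((a + 1) mod (2 * t)))).

Lemma cycle_neighbors (t p : nat) : 2 <= t -> p < 2 * t ->
  exists a b, a < 2 * t /\ b < 2 * t /\ a <> b /\ a <> p /\ b <> p /\
    (a + 1) mod (2 * t) = p /\ (p + 1) mod (2 * t) = b.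
Proof.
  intros Ht Hp.
  destruct (Nat.eq_dec p 0) as [->|Hp0].
  - exists (2 * t - 1), 1. repeat split; try lia.
    + replace (2 * t - 1 + 1) with (2 * t) by lia. apply Nat.Div0.mod_same.
    + apply Nat.mod_small. lia.
  - destruct (Nat.eq_dec (p + 1) (2 * t)) as [Hlast|Hlast].
    + exists (p - 1), 0. repeat split; try lia.
      * rewrite Nat.mod_small; lia.
      * rewrite Hlast. apply Nat.Div0.mod_same.
    + exists (p - 1), (p + 1). repeat split; try lia; rewrite Nat.mod_small; lia.
Qed.

Lemma ngon_cycle_type_twice (I V : Type) (tau : V -> I) (inc : V -> V -> Prop)
    (S : V -> Prop) (t : nat) (f : nat -> V) (j k c : I) :
  geometry tau inc -> 2 <= t -> ngon_cycle inc S t f ->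
  (forall v, S v -> tau v = j \/ tau v = k) -> c = j \/ c = k ->
  exists a b, a < 2 * t /\ b < 2 * t /\ a <> b /\ tau (f a) = c /\ tau (f b) = c.
Proof.
  intros [_ Hgeo] Ht [Hinj [HS Hinc]] HSjk Hc.
  assert (Hstep : forall a, a + 1 < 2 * t -> tau (f a) <> tau (f (a + 1))).
  { intros a Ha Heq. pose proof (Hinc a ltac:(lia)) as Hnext.
    rewrite Nat.mod_small in Hnext by lia.
    apply (Hgeo _ _ Heq), Hinj in Hnext; lia. }
  assert (HT : forall a, a < 2 * t -> tau (f a) = j \/ tau (f a) = k)
    by (intros a Ha; apply HSjk, HS, Ha).
  (* the types of positions 0, 1, 2, 3 alternate between j and k *)
  pose proof (Hstep 0 ltac:(lia)). pose proof (Hstep 1 ltac:(lia)).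
  pose proof (Hstep 2 ltac:(lia)). simpl in *.
  destruct (HT 0 ltac:(lia)), (HT 1 ltac:(lia)), (HT 2 ltac:(lia)), (HT 3 ltac:(lia)), Hc;
  first [ exists 0, 2; repeat split; (lia || congruence)
        | exists 1, 3; repeat split; (lia || congruence)
        | exfalso; congruence ].
Qed.

Lemma has_ngon_Some (V : Type) (inc : V -> V -> Prop) (inc' : option V -> option V -> Prop)
    (S : V -> Prop) (S' : option V -> Prop) (t : nat) (f : nat -> option V) :
  (forall u v, inc' (Some u) (Some v) -> inc u v) ->
  (forall v, S' (Some v) -> S v) ->
  2 <= t -> ngon_cycle inc' S' t f -> (forall a, a < 2 * t -> f a <> None) ->
  has_ngon inc S t.
Proof.
  intros Hinc HS Ht [Hinj [HS' Hinc']] Hsome. split; [exact Ht|].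
  destruct (f 0) as [v0|] eqn:F0; [|exfalso; apply (Hsome 0); [lia|exact F0]].
  set (g a := match f a with Some v => v | None => v0 end).
  assert (Hfg : forall a, a < 2 * t -> f a = Some (g a)).
  { intros a Ha. unfold g. destruct (f a) eqn:E; [reflexivity|].
    exfalso. exact (Hsome a Ha E). }
  exists g. split; [|split].
  - intros a b Ha Hb E. apply Hinj; [exact Ha|exact Hb|]. rewrite (Hfg a Ha), (Hfg b Hb), E.
    reflexivity.
  - intros a Ha. apply HS. rewrite <- (Hfg a Ha). exact (HS' a Ha).
  - intros a Ha. apply Hinc.
    rewrite <- (Hfg a Ha), <- Hfg by (apply Nat.mod_upper_bound; lia). exact (Hinc' a Ha).
Qed.

Section Extension.
Variables (I V : Type) (m : I -> I -> entry) (tau : V -> I)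
  (inc : V -> V -> Prop) (X : V -> Prop) (i : I).
Hypothesis Hcox : coxeter_diagram m.
Hypothesis Hgeo : geometry tau inc.
Hypothesis HflagX : flag inc X.
Hypothesis HtypeX : forall v, X v -> tau v <> i.

Notation tau' := (ext_type tau i).
Notation inc' := (ext_inc m tau inc X i).

Lemma ext_geometry : geometry tau' inc'.
Proof.
  destruct Hgeo as [Hsym Htype]. split.
  - intros [u|] [w|]; simpl; auto.
  - intros [u|] [w|]; simpl; intro Heq.
    + rewrite (Htype u w Heq). split; [intros ->; reflexivity|congruence].
    + split; [|discriminate].
      intros [Xu|[Hne _]]; exfalso; [exact (HtypeX Xu Heq)|exact (Hne Heq)].
    + split; [|discriminate].
      intros [Xw|[Hne _]]; exfalso; [exact (HtypeX Xw (eq_sym Heq))|exact (Hne (eq_sym Heq))].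
    + tauto.
Qed.

Lemma ext_new_incident_type (v : V) : inc' (Some v) None -> tau v <> i.
Proof. intros [Xv|[Hne _]]; [exact (HtypeX Xv)|exact Hne]. Qed.

Lemma ext_new_incident_adjacent (va vb : V) :
  inc' (Some va) None -> inc' (Some vb) None ->
  tau va = tau vb -> adjacent m i (tau va) -> va = vb.
Proof.
  intros [Xa|[_ Na]] [Xb|[_ Nb]] Hab Hadj; try (rewrite Hab in Hadj; contradiction);
    try contradiction.
  exact (flag_type_inj Hgeo HflagX Xa Xb Hab).
Qed.

Lemma ext_new_not_on_cycle (S : option V -> Prop) (t : nat) (f : nat -> option V) (j k : I)
    (p : nat) :
  adjacent m j k -> (forall u, S u -> tau' u = j \/ tau' u = k) ->
  2 <= t -> ngon_cycle inc' S t f -> p < 2 * t -> f p <> None.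
Proof.
  intros Hjk HSjk Ht [Hinj [HS Hinc]] Hp Fp.
  destruct (adjacent_other (i := i) Hcox Hjk) as [c [Hic Hother]].
  { pose proof (HSjk _ (HS p Hp)) as Hpjk. rewrite Fp in Hpjk. exact Hpjk. }
  destruct (cycle_neighbors Ht Hp) as [a [b [Ha [Hb [Hab [Hap [Hbp [Ea Eb]]]]]]]].
  assert (Ia := Hinc a Ha). rewrite Ea, Fp in Ia.
  assert (Ib := Hinc p Hp). rewrite Eb, Fp in Ib.
  destruct (f a) as [va|] eqn:Fa; [|exfalso; apply Hap, Hinj; congruence].
  destruct (f b) as [vb|] eqn:Fb; [|exfalso; apply Hbp, Hinj; congruence].
  assert (Hc : forall q v, q < 2 * t -> f q = Some v -> inc' (Some v) None -> tau v = c).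
  { intros q v Hq Fq Iv. pose proof (HSjk _ (HS q Hq)) as Hq'. rewrite Fq in Hq'.
    destruct (Hother _ Hq') as [Hi|Hi]; [exfalso; exact (ext_new_incident_type Iv Hi)|exact Hi]. }
  assert (Ta : tau va = c) by exact (Hc a va Ha Fa Ia).
  assert (Tb : tau vb = c) by exact (Hc b vb Hb Fb Ib).
  apply Hab, Hinj; [exact Ha|exact Hb|].
  rewrite Fa, Fb, (ext_new_incident_adjacent Ia Ib); [reflexivity|congruence|congruence].
Qed.

Lemma ext_propF : propF m tau inc -> propF m tau' inc'.
Proof.
  intros HF [u|] [w|]; simpl; intros Hne Hnadj.
  - exact (HF u w Hne Hnadj).
  - right. split; [exact Hne|]. intro Hadj. exact (Hnadj (adjacent_sym Hcox Hadj)).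
  - right. split; [congruence|exact Hnadj].
  - contradiction.
Qed.

Lemma ext_residue_Some (Y : option V -> Prop) (j k : I) (v : V) :
  residue_ij tau' inc' Y j k (Some v) -> residue_ij tau inc (fun w => Y (Some w)) j k v.
Proof.
  intros [HnY [Hinc Htype]]. split; [exact HnY|split; [|exact Htype]].
  intros w Hw. exact (Hinc (Some w) Hw).
Qed.

Lemma ext_residue_not_covered_by_new (Y : option V -> Prop) (t : nat) (f : nat -> option V)
    (j k c : I) :
  Y None -> 2 <= t -> ngon_cycle inc' (residue_ij tau' inc' Y j k) t f ->
  c = j \/ c = k -> adjacent m i c -> False.
Proof.
  intros YN Ht Hcyc Hc Hic.
  destruct (ngon_cycle_type_twice ext_geometry Ht Hcyc (@residue_ij_type _ _ _ _ Y j k) Hc)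
    as [a [b [Ha [Hb [Hab [Ta Tb]]]]]].
  destruct Hcyc as [Hinj [HS _]].
  destruct (HS a Ha) as [NYa [Ia _]], (HS b Hb) as [NYb [Ib _]].
  destruct (f a) as [va|] eqn:Fa; [|contradiction].
  destruct (f b) as [vb|] eqn:Fb; [|contradiction].
  simpl in Ta, Tb. apply Hab, Hinj; [exact Ha|exact Hb|].
  rewrite Fa, Fb, (ext_new_incident_adjacent (Ia None YN) (Ib None YN)); [reflexivity|congruence|].
  rewrite Ta. exact Hic.
Qed.

Lemma ext_propP : propP m tau inc -> propP m tau' inc'.
Proof.
  intros HP j k Y Hjk HflagY HtypeY Hcover t Hlt [Ht [f Hcyc]].
  assert (Hsome : forall a, a < 2 * t -> f a <> None).
  { intros a Ha Fa. destruct (classic (Y None)) as [YN|NYN].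
    - destruct Hcyc as [_ [HS _]]. apply (proj1 (HS a Ha)). rewrite Fa. exact YN.
    - exact (ext_new_not_on_cycle Hjk (@residue_ij_type _ _ _ _ Y j k) Ht Hcyc Ha Fa). }
  apply (HP j k (fun v => Y (Some v)) Hjk) with (t := t); [| | |exact Hlt|].
  - intros u v. exact (HflagY (Some u) (Some v)).
  - intros w Hw. exact (HtypeY (Some w) Hw).
  - intros l Hlj Hlk Hl. destruct (Hcover l Hlj Hlk Hl) as [[w|] [Hw Htw]].
    + exists w. split; assumption.
    + exfalso. simpl in Htw. subst l.
      destruct Hl as [Hij|Hik].
      * exact (ext_residue_not_covered_by_new Hw Ht Hcyc (or_introl eq_refl)
                 (adjacent_sym Hcox Hij)).
      * exact (ext_residue_not_covered_by_new Hw Ht Hcyc (or_intror eq_refl)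
                 (adjacent_sym Hcox Hik)).
  - exact (has_ngon_Some (fun u v H => H) (ext_residue_Some (j := j) (k := k)) Ht Hcyc Hsome).
Qed.

Lemma ext_propD : propD m tau inc -> propD m tau' inc'.
Proof.
  intros HD j k Hge4 [Ht [f Hcyc]].
  assert (Hjk : adjacent m j k).
  { apply (adjacent_of_ge3 Hcox). destruct (m j k); simpl in Hge4 |- *; [lia|trivial]. }
  apply (HD j k Hge4).
  apply (has_ngon_Some (S' := fun u => tau' u = j \/ tau' u = k) (fun u v H => H)
           (fun v H => H) Ht Hcyc).
  intros a Ha. exact (ext_new_not_on_cycle Hjk (fun u Hu => Hu) Ht Hcyc Ha).
Qed.

Lemma ext_flag_flag : flag inc' (ext_flag X).
Proof. intros [u|] [w|]; simpl; auto. Qed.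

End Extension.

Theorem mainTheorem2 (I V : Type) (m : I -> I -> entry) (tau : V -> I)
    (inc : V -> V -> Prop) (X : V -> Prop) (i : I) :
  coxeter_diagram m -> no_A3 m ->
  geometry tau inc ->
  propF m tau inc -> propP m tau inc -> propD m tau inc ->
  flag inc X -> (forall v, X v -> tau v <> i) ->
  geometry (ext_type tau i) (ext_inc m tau inc X i) /\
  propF m (ext_type tau i) (ext_inc m tau inc X i) /\
  propP m (ext_type tau i) (ext_inc m tau inc X i) /\
  propD m (ext_type tau i) (ext_inc m tau inc X i) /\
  flag (ext_inc m tau inc X i) (ext_flag X).
Proof.
  intros Hcox _ Hgeo HF HP HD HflagX HtypeX.
  split; [|split; [|split; [|split]]].
  - exact (ext_geometry m Hgeo HtypeX).
  - exact (ext_propF X Hcox HF).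
  - exact (ext_propP Hcox Hgeo HflagX HtypeX HP).
  - exact (ext_propD Hcox Hgeo HflagX HtypeX HD).
  - exact (ext_flag_flag m tau i HflagX).
Qed.
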